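(* Let $M=M(S^2;\frac{q_1}{p_1},\frac{q_2}{p_2},\frac{q_3}{p_3})$ with $e(M)\neq0$, and let $\rho:\pi_1(M)\to\mathrm{SL}_2(\mathbb{C})$ be a diagonal representation with $\rho(h)=\pm I$. Then $H^1(M,\mathrm{Ad}\,\rho)=0$ if $\rho$ is not exceptional, and $\dim H^1(M,\mathrm{Ad}\,\rho)=2$ if $\rho$ is exceptional.
   Context: $M(S^2;\frac{q_1}{p_1},\frac{q_2}{p_2},\frac{q_3}{p_3})$ ($(p_i,q_i)$ coprime, $p_i\ge1$) is the closed Seifert manifold obtained from $S_{0,3}\times S^1$ by gluing solid tori whose meridians are $p_ic_i+q_ih_i$; $e(M)=\sum_iq_i/p_i$; $\pi_1(M)=\langle c_1,c_2,c_3,h\mid [c_i,h]=1=c_i^{p_i}h^{q_i},\ c_1c_2c_3=1\rangle$. A representation $\rho$ is exceptional if $\rho(h)=\pm I$ and $\rho(c_i)\neq\pm I$ for $i=1,2,3$. $\mathrm{Ad}\,\rho$ is the conjugation action on $\mathfrak{sl}_2(\mathbb{C})$ and $H^1(M,\mathrm{Ad}\,\rho)=Z^1/B^1$, where $Z^1$ is the space of maps $\varepsilon:\pi_1(M)\to\mathfrak{sl}_2(\mathbb{C})$ with $\varepsilon(xy)=\varepsilon(x)+\mathrm{Ad}\,\rho(x)\varepsilon(y)$ and $B^1=\{x\mapsto A-\mathrm{Ad}\,\rho(x)A : A\in\mathfrak{sl}_2(\mathbb{C})\}$. *)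

From mathcomp Require Import all_boot all_algebra.
From mathcomp Require Import complex.
From mathcomp Require Import Rstruct.
Set Implicit Arguments. Unset Strict Implicit. Unset Printing Implicit Defensive.
Import GRing.Theory.
Local Open Scope ring_scope.

Definition C : closedFieldType := (Rdefinitions.R)[i].

Inductive gen := gc1 | gc2 | gc3 | gh.

(* a letter is a generator together with a flag: false = x, true = x^-1 *)
Definition letter := (gen * bool)%type.
Definition word := seq letter.

Definition inv_letter (x : letter) : letter := (x.1, ~~ x.2).

Definition gpow (g : gen) (n : int) : word := nseq `|n|%N (g, (n < 0)%R).

Definition gc (i : 'I_3) : gen :=
  match val i with 0 => gc1 | 1 => gc2 | _ => gc3 end.

Definition rel_comm (i : 'I_3) : word :=
  [:: (gc i, false); (gh, false); (gc i, true); (gh, true)].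
Definition rel_fib (p : 'I_3 -> nat) (q : 'I_3 -> int) (i : 'I_3) : word :=
  gpow (gc i) (p i)%:Z ++ gpow gh (q i).
Definition rel_prod : word := [:: (gc1, false); (gc2, false); (gc3, false)].

(* The congruence on words whose quotient is
   pi_1(M) = < c1,c2,c3,h | [c_i,h] = 1 = c_i^{p_i} h^{q_i}, c1 c2 c3 = 1 >. *)
Inductive pi1_eq (p : 'I_3 -> nat) (q : 'I_3 -> int) : word -> word -> Prop :=
| pe_refl w : pi1_eq p q w w
| pe_sym u v : pi1_eq p q u v -> pi1_eq p q v u
| pe_trans u v w : pi1_eq p q u v -> pi1_eq p q v w -> pi1_eq p q u w
| pe_ctx a b u v : pi1_eq p q u v -> pi1_eq p q (a ++ u ++ b) (a ++ v ++ b)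
| pe_cancel x : pi1_eq p q [:: x; inv_letter x] [::]
| pe_comm i : pi1_eq p q (rel_comm i) [::]
| pe_fib i : pi1_eq p q (rel_fib p q i) [::]
| pe_prod : pi1_eq p q rel_prod [::].

(* A representation rho : pi_1(M) -> SL_2(C), given as a function on words
   constant on classes of pi1_eq and multiplicative. *)
Definition is_SL2_rep p q (rho : word -> 'M[C]_2) : Prop :=
  [/\ forall u v, pi1_eq p q u v -> rho u = rho v,
      rho [::] = 1%:M,
      forall u v, rho (u ++ v) = rho u *m rho v &
      forall w, \det (rho w) = 1].

Definition rho_h (rho : word -> 'M[C]_2) := rho [:: (gh, false)].
Definition rho_c (rho : word -> 'M[C]_2) (i : 'I_3) := rho [:: (gc i, false)].

Definition diagonal_rep (rho : word -> 'M[C]_2) : Prop :=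
  forall w, is_diag_mx (rho w).

Definition exceptional (rho : word -> 'M[C]_2) : Prop :=
  (rho_h rho = 1%:M \/ rho_h rho = - 1%:M) /\
  forall i : 'I_3, rho_c rho i <> 1%:M /\ rho_c rho i <> - 1%:M.

Definition in_sl2 (A : 'M[C]_2) : Prop := \tr A = 0.
Definition Ad (g A : 'M[C]_2) : 'M[C]_2 := g *m A *m invmx g.

(* Z^1(pi_1 M, Ad rho): maps eps : pi_1(M) -> sl_2(C) (i.e. functions on words
   constant on pi1_eq classes) with eps(xy) = eps(x) + Ad rho(x) eps(y). *)
Definition cocycle p q (rho : word -> 'M[C]_2) (eps : word -> 'M[C]_2) : Prop :=
  [/\ forall w, in_sl2 (eps w),
      forall u v, pi1_eq p q u v -> eps u = eps v &
      forall u v, eps (u ++ v) = eps u + Ad (rho u) (eps v)].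

Definition coboundary (rho : word -> 'M[C]_2) (eps : word -> 'M[C]_2) : Prop :=
  exists A : 'M[C]_2, in_sl2 A /\ forall w, eps w = A - Ad (rho w) A.

Definition H1_zero p q rho : Prop :=
  forall eps, cocycle p q rho eps -> coboundary rho eps.

(* dim_C H^1 = 2: the classes of two cocycles e1, e2 form a basis of Z^1/B^1 *)
Definition H1_dim2 p q rho : Prop :=
  exists e1 e2 : word -> 'M[C]_2,
    [/\ cocycle p q rho e1, cocycle p q rho e2,
        (forall eps, cocycle p q rho eps ->
           exists a b : C, coboundary rho (fun w => eps w - a *: e1 w - b *: e2 w)) &
        (forall a b : C, coboundary rho (fun w => a *: e1 w + b *: e2 w) ->
           a = 0 /\ b = 0)].

Definition euler (p : 'I_3 -> nat) (q : 'I_3 -> int) : rat :=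
  \sum_(i < 3) (q i)%:~R / (p i)%:R.

(* Since rho is diagonal, Ad rho splits sl_2(C) into three lines on which
   pi_1(M) acts through the characters 1, alpha and alpha^-1, where alpha(w) is
   the ratio of the diagonal entries of rho(w); alpha(h) = 1 because rho(h) = +-I.
   So H^1 is computed entrywise, with coefficients twisted by a character chi.
   A chi-cocycle is determined by its values on c_1, c_2, c_3, h, and these values
   are exactly the solutions of the linear equations obtained by differentiating
   the relators.  If chi(c_k) <> 1 for some k, the commutator [c_k, h] forces
   f(h) = 0, and then the product relation leaves two free values; a coboundary
   accounts for one of them.  If moreover chi(c_j) = 1, the relation
   c_j^p_j h^q_j = 1 forces f(c_j) = 0 and every cocycle is a coboundary; if
   chi(c_i) <> 1 for all i these relations hold automatically, since chi(c_i) is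
   then a nontrivial p_i-th root of unity, and H^1 is a line.  For the trivial
   character the relations give p_i f(c_i) + q_i f(h) = 0 and
   f(c_1) + f(c_2) + f(c_3) = 0, hence e(M) f(h) = 0, so H^1 = 0 as e(M) <> 0.
   Finally rho is exceptional exactly when alpha(c_i) <> 1 for all i. *)

From mathcomp Require Import all_boot all_algebra.
From mathcomp Require Import complex.
From mathcomp Require Import Rstruct.
From mathcomp Require Import ring.
Import GRing.Theory Num.Theory.
Set Implicit Arguments. Unset Strict Implicit. Unset Printing Implicit Defensive.
Local Open Scope ring_scope.

Lemma sum_expr_unity_root_eq0 (R : idomainType) (x : R) n :
  x != 1 -> x ^+ n = 1 -> \sum_(i < n) x ^+ i = 0.
Proof.
move=> x_neq1 xn1; apply/eqP; have /eqP := subrX1 x n.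
by rewrite xn1 subrr eq_sym mulf_eq0 subr_eq0 (negbTE x_neq1).
Qed.

Lemma sum_expr1n (R : pzSemiRingType) n : \sum_(i < n) (1 : R) ^+ i = n%:R.
Proof. by rewrite (eq_bigr (fun=> 1)) ?sumr_const ?card_ord // => i _; rewrite expr1n. Qed.

(* [C] is declared only as a closed field; its characteristic 0 comes from R[i]. *)
Lemma natrC_eq0 n : ((n%:R : C) == 0) = (n == 0)%N.
Proof. exact: (@pnatr_eq0 (Rdefinitions.R)[i]). Qed.

Lemma euler_neq0C p q : euler p q != 0 -> \sum_(i < 3) ((q i)%:~R / (p i)%:R : C) != 0.
Proof.
rewrite -(fmorph_eq0 (@ratr (Rdefinitions.R)[i])) /euler rmorph_sum.
by under eq_bigr do rewrite fmorph_div rmorph_nat rmorph_int.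
Qed.

Lemma mul_diag_mxE (R : pzSemiRingType) n (g B : 'M[R]_n) i j :
  is_diag_mx g -> (g *m B) i j = g i i * B i j.
Proof. by case/diag_mxP => d ->; rewrite mul_diag_mx !mxE eqxx mulr1n. Qed.

Lemma mul_mx_diagE (R : pzSemiRingType) n (B g : 'M[R]_n) i j :
  is_diag_mx g -> (B *m g) i j = B i j * g j j.
Proof. by case/diag_mxP => d ->; rewrite mul_mx_diag !mxE eqxx mulr1n. Qed.

Lemma diag_mx_entry_neq0 (F : fieldType) n (g : 'M[F]_n) i :
  is_diag_mx g -> g \in unitmx -> g i i != 0.
Proof.
case/diag_mxP => d ->; rewrite unitmxE det_diag unitfE mxE eqxx mulr1n.
by apply: contra => di0; apply/prodf_eq0; exists i.
Qed.

Lemma Ad_diag_mx (g A : 'M[C]_2) i j : is_diag_mx g -> g \in unitmx ->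
  Ad g A i j = g i i / g j j * A i j.
Proof.
move=> g_diag g_unit; have gj0 := diag_mx_entry_neq0 j g_diag g_unit.
have /matrixP/(_ i j) : Ad g A *m g = g *m A by rewrite /Ad -mulmxA mulVmx ?mulmx1.
rewrite mul_mx_diagE // mul_diag_mxE // => E.
by apply: (mulIf gj0); rewrite E mulrAC divfK.
Qed.

Lemma ord2P (i : 'I_2) : i = 0 \/ i = 1.
Proof. by case: i => [[|[|//]] ?]; [left|right]; apply: val_inj. Qed.

Lemma diag_mx2_scalar (R : pzSemiRingType) (g : 'M[R]_2) :
  is_diag_mx g -> g 0 0 = g 1 1 -> g = (g 0 0)%:M.
Proof.
move=> /is_diag_mxP g_diag g_eq; apply/matrixP => i j; rewrite mxE.
have [<-|ij] := eqVneq i j; last by rewrite g_diag // mulr0n.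
by rewrite mulr1n; case: (ord2P i) => ->.
Qed.

Lemma gen_cases g : g = gh \/ exists i, g = gc i.
Proof.
case: g; [right; exists ord0 | right; exists (lift ord0 ord0)
  | right; exists (lift ord0 (lift ord0 ord0)) | left] => //.
Qed.

Section Character.

Variables (p : 'I_3 -> nat) (q : 'I_3 -> int).

Definition character (chi : word -> C) : Prop :=
  [/\ chi [::] = 1, forall u v, chi (u ++ v) = chi u * chi v
    & forall u v, pi1_eq p q u v -> chi u = chi v].

Variable chi : word -> C.

Definition crossed_hom (f : word -> C) : Prop :=
  (forall u v, f (u ++ v) = f u + chi u * f v) /\
  (forall g, f [:: (g, true)] = - chi [:: (g, true)] * f [:: (g, false)]).

Definition twisted_cocycle (f : word -> C) : Prop :=
  (forall u v, f (u ++ v) = f u + chi u * f v) /\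
  (forall u v, pi1_eq p q u v -> f u = f v).

Definition principal (a : C) (w : word) : C := (1 - chi w) * a.

(* The Fox derivatives of the relators [c_i, h], c_i^p_i h^q_i and c_1 c_2 c_3,
   evaluated at chi, applied to the values v on the generators. *)
Definition cocycle_equations (v : gen -> C) : Prop :=
  [/\ forall i, (chi [:: (gc i, false)] - 1) * v gh = 0,
      forall i, (\sum_(k < p i) chi [:: (gc i, false)] ^+ k) * v (gc i)
                + (q i)%:~R * v gh = 0
    & v gc1 + chi [:: (gc1, false)] * (v gc2 + chi [:: (gc2, false)] * v gc3) = 0].

Hypothesis chiP : character chi.
Hypothesis chi_h : chi [:: (gh, false)] = 1.

Lemma chi_nil : chi [::] = 1. Proof. by case: chiP. Qed.
Lemma chi_cat u v : chi (u ++ v) = chi u * chi v. Proof. by case: chiP. Qed.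
Lemma chi_resp u v : pi1_eq p q u v -> chi u = chi v. Proof. by case: chiP => _ _; apply. Qed.

Lemma chi_cancel x : chi [:: x] * chi [:: inv_letter x] = 1.
Proof. by rewrite -chi_cat -chi_nil; apply/chi_resp/pe_cancel. Qed.

Lemma chi_neq0 x : chi [:: x] != 0.
Proof.
apply/eqP => chi0; have := chi_cancel x.
by rewrite chi0 mul0r => /eqP; rewrite eq_sym oner_eq0.
Qed.

Lemma chi_h_inv : chi [:: (gh, true)] = 1.
Proof. by have := chi_cancel (gh, false); rewrite chi_h mul1r. Qed.

Lemma chi_nseq x n : chi (nseq n x) = chi [:: x] ^+ n.
Proof. by elim: n => [|n IHn]; rewrite ?chi_nil // exprS -IHn -chi_cat. Qed.

Lemma chi_gpow_h z : chi (gpow gh z) = 1.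
Proof. by rewrite chi_nseq; case: (z < 0)%R; rewrite ?chi_h ?chi_h_inv expr1n. Qed.

Lemma chi_fiber i : chi [:: (gc i, false)] ^+ p i = 1.
Proof.
have := chi_resp (pe_fib p q i).
by rewrite chi_cat chi_nil chi_gpow_h mulr1 chi_nseq.
Qed.

Lemma principal_cocycle a : twisted_cocycle (principal a).
Proof. by split=> [u v|u v /chi_resp eq_uv]; rewrite /principal ?chi_cat ?eq_uv //; ring. Qed.

Section Words.

Variable f : word -> C.
Hypothesis f_cat : forall u v, f (u ++ v) = f u + chi u * f v.

Lemma cocycle_nil : f [::] = 0.
Proof.
have /(congr1 (fun x => x - f [::])) := f_cat [::] [::].
by rewrite chi_nil mul1r addrK subrr.
Qed.

Lemma cocycle_cons x w : f (x :: w) = f [:: x] + chi [:: x] * f w.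
Proof. exact: f_cat [:: x] w. Qed.

Lemma cocycle_nseq x n : f (nseq n x) = (\sum_(k < n) chi [:: x] ^+ k) * f [:: x].
Proof.
elim: n => [|n IHn]; first by rewrite big_ord0 mul0r cocycle_nil.
rewrite [nseq _ _]/= cocycle_cons IHn big_ord_recl expr0 mulrDl mul1r mulrA mulr_sumr.
by congr (_ + _ * _); apply: eq_bigr => k _; rewrite exprS.
Qed.

End Words.

Lemma twisted_cocycle_crossed f : twisted_cocycle f -> crossed_hom f.
Proof.
case=> f_cat f_resp; split=> // g.
have := f_resp _ _ (pe_cancel p q (g, true)).
by rewrite (cocycle_nil f_cat) (f_cat [:: _]) /= => /eqP; rewrite addr_eq0 mulNr => /eqP.
Qed.

Section Crossed.

Variable f : word -> C.
Hypothesis fP : crossed_hom f.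

Let f_cat := fP.1.
Let f_inv := fP.2.

Lemma crossed_gpow_h z : f (gpow gh z) = z%:~R * f [:: (gh, false)].
Proof.
rewrite /gpow cocycle_nseq //; case: z => n /=.
  by rewrite chi_h sum_expr1n.
by rewrite chi_h_inv sum_expr1n f_inv chi_h_inv NegzE mulN1r mulrN -mulNr.
Qed.

Lemma crossed_rel_comm i :
  f (rel_comm i) = (chi [:: (gc i, false)] - 1) * f [:: (gh, false)].
Proof.
have chi_ci : chi [:: (gc i, false)] * chi [:: (gc i, true)] = 1 := chi_cancel (gc i, false).
rewrite /rel_comm (cocycle_cons f_cat _ [:: _; _; _]) (cocycle_cons f_cat _ [:: _; _]).
rewrite (cocycle_cons f_cat _ [:: _]) !f_inv chi_h chi_h_inv.
set x := chi [:: (gc i, false)]; set y := chi [:: (gc i, true)] in chi_ci *.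
set fc := f [:: (gc i, false)]; set fh := f [:: (gh, false)].
transitivity (fc + x * fh - x * y * (fc + fh)); first ring.
by rewrite chi_ci; ring.
Qed.

Lemma crossed_rel_fib i : f (rel_fib p q i) =
  (\sum_(k < p i) chi [:: (gc i, false)] ^+ k) * f [:: (gc i, false)]
  + (q i)%:~R * f [:: (gh, false)].
Proof. by rewrite /rel_fib f_cat cocycle_nseq // chi_nseq chi_fiber mul1r crossed_gpow_h. Qed.

Lemma crossed_rel_prod : f rel_prod = f [:: (gc1, false)]
  + chi [:: (gc1, false)] * (f [:: (gc2, false)] + chi [:: (gc2, false)] * f [:: (gc3, false)]).
Proof.
by rewrite /rel_prod (cocycle_cons f_cat _ [:: _; _]) (cocycle_cons f_cat _ [:: _]).
Qed.

Lemma crossed_eq0 : f [:: (gh, false)] = 0 -> (forall i, f [:: (gc i, false)] = 0) ->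
  forall w, f w = 0.
Proof.
move=> fh0 fc0; have f_gen g : f [:: (g, false)] = 0 by case: (gen_cases g) => [->|[i ->]].
elim=> [|[g b] w IHw]; first exact: cocycle_nil.
by rewrite cocycle_cons // IHw mulr0 addr0; case: b; rewrite ?f_inv f_gen ?mulr0.
Qed.

End Crossed.

Lemma twisted_cocycle_equations f :
  twisted_cocycle f -> cocycle_equations (fun g => f [:: (g, false)]).
Proof.
move=> fP; have fX := twisted_cocycle_crossed fP.
have rel0 u : pi1_eq p q u [::] -> f u = 0 by move/fP.2 ->; exact: cocycle_nil fP.1.
split=> [i|i|] /=.
- by rewrite -(crossed_rel_comm fX); apply/rel0/pe_comm.
- by rewrite -(crossed_rel_fib fX); apply/rel0/pe_fib.
- by rewrite -(crossed_rel_prod fX); apply/rel0/pe_prod.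
Qed.

Lemma prod_equation_two_zero (v : gen -> C) (j k : 'I_3) :
  v gc1 + chi [:: (gc1, false)] * (v gc2 + chi [:: (gc2, false)] * v gc3) = 0 ->
  j != k -> v (gc j) = 0 -> v (gc k) = 0 -> forall i, v (gc i) = 0.
Proof.
have nz1 := chi_neq0 (gc1, false); have nz2 := chi_neq0 (gc2, false).
move=> prod0; case: j k => [[|[|[|//]]] ?] [[|[|[|//]]] ?] //= _; rewrite /gc /= => vj vk;
  case=> [[|[|[|//]]] ?]; rewrite /gc /=; move: prod0; rewrite ?vj ?vk ?(mulr0, addr0, add0r) //;
  by move/eqP; rewrite ?mulf_eq0 ?(negbTE nz1) ?(negbTE nz2) => /eqP.
Qed.

Lemma twisted_cocycleB f g :
  twisted_cocycle f -> twisted_cocycle g -> twisted_cocycle (fun w => f w - g w).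
Proof.
case=> f_cat f_resp [g_cat g_resp]; split=> [u v|u v uv].
  by rewrite f_cat g_cat; ring.
by rewrite (f_resp _ _ uv) (g_resp _ _ uv).
Qed.

Lemma twisted_cocycleZ s f : twisted_cocycle f -> twisted_cocycle (fun w => s * f w).
Proof.
case=> f_cat f_resp; split=> [u v|u v uv]; last by rewrite (f_resp _ _ uv).
by rewrite f_cat; ring.
Qed.

Lemma eq_twisted_cocycle f g : f =1 g -> twisted_cocycle f -> twisted_cocycle g.
Proof.
by move=> fg [f_cat f_resp]; split=> [u v|u v uv]; rewrite -!fg ?f_cat //; apply: f_resp.
Qed.

Lemma twisted_cocycle_eq_two_gens f g (j k : 'I_3) :
  twisted_cocycle f -> twisted_cocycle g -> j != k ->
  f [:: (gh, false)] = g [:: (gh, false)] ->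
  f [:: (gc j, false)] = g [:: (gc j, false)] -> f [:: (gc k, false)] = g [:: (gc k, false)] ->
  forall w, f w = g w.
Proof.
move=> fP gP jk eh ej ek w; apply/eqP; rewrite -subr_eq0; apply/eqP.
have dP := twisted_cocycleB fP gP; have [_ _ prod0] := twisted_cocycle_equations dP.
apply: (crossed_eq0 (twisted_cocycle_crossed dP) _ _ w) => /=; first by rewrite eh subrr.
move=> i; apply: (@prod_equation_two_zero (fun x => f [:: (x, false)] - g [:: (x, false)]) j k);
  by rewrite //= ?ej ?ek subrr.
Qed.

Definition letter_value (v : gen -> C) (x : letter) : C :=
  if x.2 then - chi [:: (x.1, true)] * v x.1 else v x.1.

Fixpoint free_cocycle (v : gen -> C) (w : word) : C :=
  if w is x :: w' then letter_value v x + chi [:: x] * free_cocycle v w' else 0.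

Lemma free_cocycle_gen v g : free_cocycle v [:: (g, false)] = v g.
Proof. by rewrite /= mulr0 addr0. Qed.

Lemma free_cocycle_crossed v : crossed_hom (free_cocycle v).
Proof.
split=> [u w|g]; last by rewrite /= !mulr0 !addr0.
elim: u => [|x u IHu] /=; first by rewrite chi_nil mul1r add0r.
by rewrite IHu (chi_cat [:: x] u); ring.
Qed.

Lemma free_cocycleP v : cocycle_equations v -> twisted_cocycle (free_cocycle v).
Proof.
case=> comm0 fib0 prod0; have [v_cat v_inv] := free_cocycle_crossed v; split=> // u w.
elim=> {u w} [//|u w _ -> //|u w z _ -> _ -> //|a b u w uw IHuw|[g []]|i|i|].
- by rewrite !v_cat IHuw (chi_resp uw).
- by rewrite /= /letter_value /= !(mulr0, addr0) mulNr addNr.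
- have /= chi_g := chi_cancel (g, false).
  by rewrite /= /letter_value /= !(mulr0, addr0) mulNr mulrN mulrA chi_g mul1r addrN.
- by rewrite crossed_rel_comm // !free_cocycle_gen comm0.
- by rewrite crossed_rel_fib // !free_cocycle_gen fib0.
- by rewrite crossed_rel_prod // !free_cocycle_gen prod0.
Qed.

Section EulerNumber.

Hypothesis p_gt0 : forall i, (0 < p i)%N.
Hypothesis euler_neq0 : euler p q != 0.

Lemma trivial_character_cocycle_eq0 f : (forall g, chi [:: (g, false)] = 1) ->
  twisted_cocycle f -> forall w, f w = 0.
Proof.
move=> chi1 fP; have [_ fib0 prod0] := twisted_cocycle_equations fP.
set fh := f [:: (gh, false)] in fib0 *.
have fc i : f [:: (gc i, false)] = - ((q i)%:~R / (p i)%:R) * fh.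
  have p_neq0 : ((p i)%:R : C) != 0 by rewrite natrC_eq0 -lt0n.
  move: (fib0 i); rewrite /= chi1 sum_expr1n => /eqP; rewrite addr_eq0 => /eqP fci.
  by apply: (mulfI p_neq0); rewrite fci; field.
have fh0 : fh = 0.
  have /eqP := prod0; rewrite /= !chi1 !mul1r.
  rewrite (fc ord0) (fc (lift ord0 ord0)) (fc (lift ord0 (lift ord0 ord0))).
  rewrite -!mulrDl mulf_eq0 -oppr_eq0 -!opprD opprK => /orP [|/eqP //].
  by have := euler_neq0C euler_neq0; rewrite !big_ord_recl big_ord0 addr0 => /negbTE ->.
apply: (crossed_eq0 (twisted_cocycle_crossed fP)) => // i.
by rewrite fc fh0 mulr0.
Qed.

Lemma cocycle_principal j f : chi [:: (gc j, false)] = 1 ->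
  twisted_cocycle f -> exists a, forall w, f w = principal a w.
Proof.
move=> chi_j fP; have [comm0 fib0 _] := twisted_cocycle_equations fP.
have [k chi_k | chi1] := pickP (fun k => chi [:: (gc k, false)] != 1); last first.
  exists 0 => w; rewrite /principal mulr0; apply: (trivial_character_cocycle_eq0 _ fP) => g.
  by case: (gen_cases g) => [->|[i ->]] //; apply/eqP/negbFE/chi1.
have chi_k1 : 1 - chi [:: (gc k, false)] != 0 by rewrite subr_eq0 eq_sym.
have fh0 : f [:: (gh, false)] = 0.
  by move: (comm0 k) => /eqP; rewrite mulf_eq0 subr_eq0 (negbTE chi_k) => /eqP.
have fj0 : f [:: (gc j, false)] = 0.
  move: (fib0 j) => /eqP; rewrite /= chi_j sum_expr1n fh0 mulr0 addr0 mulf_eq0 natrC_eq0.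
  by rewrite eqn0Ngt p_gt0 => /eqP.
have jk : j != k by apply: contraNneq chi_k => <-; rewrite chi_j.
exists (f [:: (gc k, false)] / (1 - chi [:: (gc k, false)])).
apply: (twisted_cocycle_eq_two_gens fP (principal_cocycle _) jk).
- by rewrite /principal chi_h subrr mul0r.
- by rewrite /principal chi_j subrr mul0r.
- by rewrite /principal mulrC divfK.
Qed.

End EulerNumber.

(* A nonzero solution of the product equation vanishing at c_1 and h. *)
Definition exceptional_values (g : gen) : C :=
  match g with gc2 => - chi [:: (gc2, false)] | gc3 => 1 | _ => 0 end.

Definition exceptional_cocycle : word -> C := free_cocycle exceptional_values.

Section Exceptional.

Hypothesis chi_neq1 : forall i, chi [:: (gc i, false)] != 1.

Lemma exceptional_cocycleP : twisted_cocycle exceptional_cocycle.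
Proof.
apply: free_cocycleP; split=> [i|i|] /=; first by rewrite mulr0.
  by rewrite sum_expr_unity_root_eq0 ?chi_fiber // mul0r mulr0 addr0.
by rewrite mulr1 addNr mulr0 addr0.
Qed.

Lemma exceptional_cocycle_span f : twisted_cocycle f ->
  exists s a, forall w, f w - s * exceptional_cocycle w = principal a w.
Proof.
move=> fP; have [comm0 _ _] := twisted_cocycle_equations fP.
have chi_c1 : 1 - chi [:: (gc1, false)] != 0 by rewrite subr_eq0 eq_sym (chi_neq1 ord0).
have fh0 : f [:: (gh, false)] = 0.
  by move: (comm0 ord0) => /eqP; rewrite mulf_eq0 subr_eq0 (negbTE (chi_neq1 _)) => /eqP.
set a := f [:: (gc1, false)] / (1 - chi [:: (gc1, false)]).
exists (f [:: (gc3, false)] - (1 - chi [:: (gc3, false)]) * a), a.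
have F_gen := free_cocycle_gen exceptional_values.
apply: (@twisted_cocycle_eq_two_gens _ _ ord0 (lift ord0 (lift ord0 ord0))) => //.
- exact: twisted_cocycleB fP (twisted_cocycleZ _ exceptional_cocycleP).
- exact: principal_cocycle.
all: rewrite /exceptional_cocycle F_gen /principal /gc /=.
- by rewrite fh0 chi_h !mulr0 !subrr mul0r.
- by rewrite mulr0 subr0 /a mulrC divfK.
- by rewrite mulr1 opprB addrCA subrr addr0.
Qed.

Lemma exceptional_cocycle_not_principal s a :
  (forall w, s * exceptional_cocycle w = principal a w) -> s = 0.
Proof.
move=> sFa; have := sFa [:: (gc1, false)]; have := sFa [:: (gc3, false)].
rewrite /exceptional_cocycle !free_cocycle_gen /principal /= mulr1 mulr0 => ->.
move/esym/eqP; rewrite mulf_eq0 subr_eq0 eq_sym (negbTE (chi_neq1 ord0)) => /eqP ->.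
by rewrite mulr0.
Qed.

End Exceptional.

End Character.

Lemma not_exceptional_central (rho : word -> 'M[C]_2) :
  rho_h rho = 1%:M \/ rho_h rho = - 1%:M -> ~ exceptional rho ->
  exists j, rho_c rho j = 1%:M \/ rho_c rho j = - 1%:M.
Proof.
move=> rho_h nexc.
case: (boolP [exists j, (rho_c rho j == 1%:M) || (rho_c rho j == - 1%:M)])
  => [/existsP [j rho_j]|/existsPn none].
  by exists j; case/orP: rho_j => /eqP; [left|right].
by case: nexc; split=> // i; have := none i; rewrite negb_or => /andP [/eqP ? /eqP ?].
Qed.

Section DiagonalRepresentation.

Variables (p : 'I_3 -> nat) (q : 'I_3 -> int) (rho : word -> 'M[C]_2).
Hypothesis rhoP : is_SL2_rep p q rho.
Hypothesis rho_diag : diagonal_rep rho.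

Lemma rho_unitmx w : rho w \in unitmx.
Proof. by case: rhoP => _ _ _ det1; rewrite unitmxE det1 unitr1. Qed.

Lemma rho_entry_neq0 w i : rho w i i != 0.
Proof. exact: diag_mx_entry_neq0 (rho_diag w) (rho_unitmx w). Qed.

Lemma rho_cat_entry u v i : rho (u ++ v) i i = rho u i i * rho v i i.
Proof. by case: rhoP => _ _ -> _; rewrite mul_diag_mxE. Qed.

Definition weight (i j : 'I_2) (w : word) : C := rho w i i / rho w j j.

Lemma weight_character i j : character p q (weight i j).
Proof.
case: rhoP => rho_resp rho_nil _ _; split=> [|u v|u v /rho_resp uv]; rewrite /weight.
- by rewrite rho_nil !mxE !eqxx mulr1n divr1.
- by rewrite !rho_cat_entry mulf_div.
- by rewrite uv.
Qed.

Lemma weight_scalar i j w : rho w = 1%:M \/ rho w = - 1%:M -> weight i j w = 1.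
Proof. by rewrite /weight; case=> ->; rewrite !mxE !eqxx mulr1n divff // ?oppr_eq0 oner_eq0. Qed.

Lemma weight_diag i w : weight i i w = 1.
Proof. exact: divff (rho_entry_neq0 w i). Qed.

Lemma weight_inv w : weight 1 0 w = (weight 0 1 w)^-1.
Proof. by rewrite /weight invf_div. Qed.

Lemma weight01_eq1 w : weight 0 1 w = 1 -> rho w = 1%:M \/ rho w = - 1%:M.
Proof.
rewrite /weight => w1; have rho_eq : rho w 0 0 = rho w 1 1.
  by rewrite -[LHS](divfK (rho_entry_neq0 w 1)) w1 mul1r.
have rhoE := diag_mx2_scalar (rho_diag w) rho_eq.
have /eqP : rho w 0 0 ^+ 2 = 1 by case: rhoP => _ _ _ /(_ w); rewrite {1}rhoE det_scalar.
rewrite sqrf_eq1 => /orP [] /eqP rho00; rewrite rhoE rho00; [by left | right].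
by apply/matrixP => i j; rewrite !mxE mulNrn.
Qed.

Lemma Ad_rho w A i j : Ad (rho w) A i j = weight i j w * A i j.
Proof. exact: Ad_diag_mx (rho_diag w) (rho_unitmx w). Qed.

Lemma cocycle_entries eps : cocycle p q rho eps ->
  forall i j, twisted_cocycle p q (weight i j) (fun w => eps w i j).
Proof.
by case=> _ eps_resp eps_cat i j; split=> [u v|u v /eps_resp -> //]; rewrite eps_cat mxE Ad_rho.
Qed.

Lemma cocycle_of_entries eps : (forall w, in_sl2 (eps w)) ->
  (forall i j, twisted_cocycle p q (weight i j) (fun w => eps w i j)) -> cocycle p q rho eps.
Proof.
move=> eps_sl2 epsP; split=> // [u v uv|u v]; apply/matrixP => i j.
  exact: (epsP i j).2.
by rewrite mxE Ad_rho; apply: (epsP i j).1.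
Qed.

Lemma coboundary_entries eps : coboundary rho eps ->
  exists2 A, in_sl2 A & forall w i j, eps w i j = principal (weight i j) (A i j) w.
Proof.
case=> A [A_sl2 epsE]; exists A => // w i j.
by rewrite epsE mxE [X in _ + X]mxE Ad_rho /principal mulrBl mul1r.
Qed.

Lemma coboundary_of_entries (eps : word -> 'M[C]_2) :
  (forall i j, exists a, forall w, eps w i j = principal (weight i j) a w) -> coboundary rho eps.
Proof.
move=> epsE; have [a aE] := fin_all_exists (fun i => fin_all_exists (epsE i)).
exists (\matrix_(i, j) if i == j then 0 else a i j); split.
  by rewrite /in_sl2 /mxtrace big1 // => i _; rewrite mxE eqxx.
move=> w; apply/matrixP => i j; rewrite mxE [X in _ + X]mxE Ad_rho aE /principal !mxE.
by case: eqP => [<-|_]; rewrite ?weight_diag ?subrr ?mul0r ?mulr0 ?subr0 //; ring.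
Qed.

Hypothesis p_gt0 : forall i, (0 < p i)%N.
Hypothesis euler_neq0 : euler p q != 0.
Hypothesis rho_h_central : rho_h rho = 1%:M \/ rho_h rho = - 1%:M.

Lemma weight_h i j : weight i j [:: (gh, false)] = 1.
Proof. exact: weight_scalar rho_h_central. Qed.

Lemma H1_zero_of_central j : rho_c rho j = 1%:M \/ rho_c rho j = - 1%:M -> H1_zero p q rho.
Proof.
move=> rho_j eps epsP; apply: coboundary_of_entries => i k.
exact: cocycle_principal (weight_character i k) (weight_h i k) p_gt0 euler_neq0 _ _
  (weight_scalar i k rho_j) (cocycle_entries epsP i k).
Qed.

Section ExceptionalRepresentation.

Hypothesis rho_exceptional : exceptional rho.

Lemma exceptional_weight_neq1 i j k : i != j -> weight i j [:: (gc k, false)] != 1.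
Proof.
move=> ij; have [_ /(_ k) [rho_k1 rho_km1]] := rho_exceptional.
have w01 : weight 0 1 [:: (gc k, false)] != 1 by apply/eqP => /weight01_eq1 [].
by case: (ord2P i) (ord2P j) ij => -> [] -> //; rewrite weight_inv invr_eq1.
Qed.

Definition exceptional_mx_cocycle (i j : 'I_2) (w : word) : 'M[C]_2 :=
  exceptional_cocycle (weight i j) w *: delta_mx i j.

Lemma exceptional_mx_cocycleP i j : i != j -> cocycle p q rho (exceptional_mx_cocycle i j).
Proof.
move=> ij; have FP := exceptional_cocycleP (weight_character i j) (weight_h i j)
  (fun k => exceptional_weight_neq1 k ij).
apply: cocycle_of_entries => [w|k l].
  rewrite /in_sl2 mxtraceZ /mxtrace big1 ?mulr0 // => k _.
  by rewrite mxE; case: (eqVneq k i) => [->|]; rewrite ?(negbTE ij).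
case: (eqVneq k i) => [->|ki]; first case: (eqVneq l j) => [->|lj].
- by apply: eq_twisted_cocycle FP => w; rewrite !mxE !eqxx mulr1.
- apply: eq_twisted_cocycle (principal_cocycle (weight_character i l) 0) => w.
  by rewrite /principal !mxE (negbTE lj) andbF !mulr0.
- apply: eq_twisted_cocycle (principal_cocycle (weight_character k l) 0) => w.
  by rewrite /principal !mxE (negbTE ki) !mulr0.
Qed.

Lemma exceptional_H1_span eps : cocycle p q rho eps -> exists a b, coboundary rho
  (fun w => eps w - a *: exceptional_mx_cocycle 0 1 w - b *: exceptional_mx_cocycle 1 0 w).
Proof.
move=> epsP; have span i j : i != j -> exists s a, forall w,
    eps w i j - s * exceptional_cocycle (weight i j) w = principal (weight i j) a w.
  move=> ij; exact: exceptional_cocycle_span (weight_character i j) (weight_h i j)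
    (fun k => exceptional_weight_neq1 k ij) _ (cocycle_entries epsP i j).
have [s1 [a1 E1]] := span 0 1 isT; have [s2 [a2 E2]] := span 1 0 isT.
have eps_diag i w : eps w i i = 0.
  apply: (trivial_character_cocycle_eq0 (weight_character i i) (weight_h i i) p_gt0 euler_neq0
    _ (cocycle_entries epsP i i)) => g; exact: weight_diag.
exists s1, s2; apply: coboundary_of_entries => k l.
case: (ord2P k) (ord2P l) => -> [] ->; [exists 0|exists a1|exists a2|exists 0] => w;
  rewrite /exceptional_mx_cocycle !mxE /= !(mulr0, mulr1, subr0) ?E1 ?E2 //.
all: by rewrite eps_diag /principal mulr0.
Qed.

Lemma exceptional_H1_indep a b : coboundary rho
    (fun w => a *: exceptional_mx_cocycle 0 1 w + b *: exceptional_mx_cocycle 1 0 w) ->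
  a = 0 /\ b = 0.
Proof.
case/coboundary_entries => A _ AE; split.
- apply: (exceptional_cocycle_not_principal (fun k => @exceptional_weight_neq1 0 1 k isT)) => w.
  by have := AE w 0 1; rewrite /exceptional_mx_cocycle !mxE /= !(mulr0, mulr1, addr0) => ->.
- apply: (exceptional_cocycle_not_principal (fun k => @exceptional_weight_neq1 1 0 k isT)) => w.
  by have := AE w 1 0; rewrite /exceptional_mx_cocycle !mxE /= !(mulr0, mulr1, add0r) => ->.
Qed.

Lemma H1_dim2_of_exceptional : H1_dim2 p q rho.
Proof.
exists (exceptional_mx_cocycle 0 1), (exceptional_mx_cocycle 1 0).
split.
- exact: exceptional_mx_cocycleP.
- exact: exceptional_mx_cocycleP.
- exact: exceptional_H1_span.
- exact: exceptional_H1_indep.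
Qed.

End ExceptionalRepresentation.

End DiagonalRepresentation.

Theorem lemma5p14 (p : 'I_3 -> nat) (q : 'I_3 -> int)
  (hp : forall i, (0 < p i)%N)
  (hcop : forall i, coprime (p i) `|q i|%N)
  (he : euler p q != 0)
  (rho : word -> 'M[C]_2)
  (hrho : is_SL2_rep p q rho)
  (hdiag : diagonal_rep rho)
  (hh : rho_h rho = 1%:M \/ rho_h rho = - 1%:M) :
  (~ exceptional rho -> H1_zero p q rho) /\
  (exceptional rho -> H1_dim2 p q rho).
Proof.
(* [hcop] is needed for M to be a manifold, not for computing with the presentation. *)
split=> [nexc | exc]; last exact: H1_dim2_of_exceptional hrho hdiag hp he hh exc.
have [j rho_j] := not_exceptional_central hh nexc.
exact: H1_zero_of_central hrho hdiag hp he hh j rho_j.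
Qed.
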